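(* There exists an independence system that is nearly finitary but is not $k$-nearly finitary for any $k\in\mathbb{N}$.
   Context: An independence system is a pair $I=(E,\mathcal{L})$ with $\mathcal{L}\subseteq 2^E$, $\emptyset\in\mathcal{L}$, and $\mathcal{L}$ closed under taking subsets. Its bases are the inclusion-maximal elements of $\mathcal{L}$. Its finitarization is $I^{\mathrm{fin}}=(E,\mathcal{L}^{\mathrm{fin}})$ where $\mathcal{L}^{\mathrm{fin}}$ consists of the sets all of whose finite subsets lie in $\mathcal{L}$. $I$ is nearly finitary if whenever a base $F$ of $I^{\mathrm{fin}}$ contains a base $B$ of $I$, the set $F\setminus B$ is finite; $I$ is $k$-nearly finitary if $|F\setminus B|\le k$ for every such pair. *)

From Stdlib Require Import List.

Definition subset {E : Type} (A B : E -> Prop) : Prop := forall x, A x -> B x.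

Definition finite_set {E : Type} (A : E -> Prop) : Prop :=
  exists l : list E, forall x, A x -> In x l.

Definition card_le {E : Type} (A : E -> Prop) (k : nat) : Prop :=
  exists l : list E, length l <= k /\ forall x, A x -> In x l.

Definition setD {E : Type} (A B : E -> Prop) : E -> Prop := fun x => A x /\ ~ B x.

Definition empty_set {E : Type} : E -> Prop := fun _ => False.

Definition independence_system {E : Type} (L : (E -> Prop) -> Prop) : Prop :=
  L empty_set /\ (forall A B, L B -> subset A B -> L A).

Definition is_base {E : Type} (L : (E -> Prop) -> Prop) (B : E -> Prop) : Prop :=
  L B /\ (forall C, L C -> subset B C -> subset C B).

Definition finitarization {E : Type} (L : (E -> Prop) -> Prop) : (E -> Prop) -> Prop :=
  fun F => forall A, finite_set A -> subset A F -> L A.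

Definition nearly_finitary {E : Type} (L : (E -> Prop) -> Prop) : Prop :=
  forall B F, is_base L B -> is_base (finitarization L) F -> subset B F ->
    finite_set (setD F B).

Definition k_nearly_finitary {E : Type} (k : nat) (L : (E -> Prop) -> Prop) : Prop :=
  forall B F, is_base L B -> is_base (finitarization L) F -> subset B F ->
    card_le (setD F B) k.

(* The ground set is N x N, viewed as columns {n} x N.  A set is independent
   when it lies in a single column n and is either bounded in height or lies
   entirely at height >= n.  Every finite subset of a column is bounded, so the
   bases of the finitarization are the whole columns, whereas a bounded set can
   always be enlarged, so the bases of the system are the tails
   T_n = {(n, m) | m >= n}.  Hence F \ B consists of the n points of column n
   below height n: always finite, but of unbounded size. *)
From Stdlib Require Import List Lia Arith.

Definition column (n : nat) : nat * nat -> Prop := fun x => fst x = n.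

Definition tail (n : nat) : nat * nat -> Prop := fun x => fst x = n /\ n <= snd x.

Definition bounded (A : nat * nat -> Prop) : Prop :=
  exists m, forall x, A x -> snd x < m.

Definition column_indep (A : nat * nat -> Prop) : Prop :=
  exists n, subset A (column n) /\ (bounded A \/ subset A (tail n)).

Lemma card_le_finite {E : Type} (A : E -> Prop) k : card_le A k -> finite_set A.
Proof. intros [l [_ Hl]]. exists l. exact Hl. Qed.

Lemma card_le_subset {E : Type} (A B : E -> Prop) k :
  subset A B -> card_le B k -> card_le A k.
Proof.
  intros HAB [l [Hlen Hl]]. exists l. split; [exact Hlen|].
  intros x Hx. exact (Hl x (HAB x Hx)).
Qed.

Lemma finite_bounded (A : nat * nat -> Prop) : finite_set A -> bounded A.
Proof.
  intros [l Hl]. exists (S (list_max (map snd l))). intros x Hx.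
  assert (Hle : snd x <= list_max (map snd l)).
  { pose proof (proj1 (list_max_le (map snd l) _) (le_n _)) as Hall.
    rewrite Forall_forall in Hall. apply Hall, in_map, Hl, Hx. }
  lia.
Qed.

Lemma column_indep_system : independence_system column_indep.
Proof.
  split.
  - exists 0. split; [intros x []|]. right. intros x [].
  - intros A B [n [Hcol Hb]] HAB. exists n. split; [intros x Hx; apply Hcol, HAB, Hx|].
    destruct Hb as [[m Hm]|Htail]; [left; exists m|right];
      intros x Hx; [apply Hm | apply Htail]; apply HAB, Hx.
Qed.

Lemma is_base_tail n : is_base column_indep (tail n).
Proof.
  split.
  - exists n. split; [intros x [H _]; exact H|]. right. intros x Hx. exact Hx.
  - intros C [n' [Hcol Hb]] Hsub x Hx.
    assert (Hn' : n = n') by exact (Hcol (n, n) (Hsub (n, n) (conj eq_refl (le_n n)))).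
    subst n'.
    destruct Hb as [[m Hm]|Htail]; [|exact (Htail x Hx)].
    exfalso. specialize (Hm (n, n + m) (Hsub (n, n + m) (conj eq_refl (Nat.le_add_r n m)))).
    simpl in Hm. lia.
Qed.

(* A bounded independent set in column n misses the point (n, m) above its
   bound and can be extended by it. *)
Lemma is_base_column_indep B :
  is_base column_indep B -> exists n, forall x, B x <-> tail n x.
Proof.
  intros [[n [Hcol Hb]] Hmax].
  destruct Hb as [[m Hm]|Htail].
  - exfalso.
    set (B' := fun z => B z \/ z = (n, m)).
    assert (HB' : column_indep B').
    { exists n. split.
      - intros z [Hz| ->]; [exact (Hcol z Hz)|reflexivity].
      - left. exists (S m). intros z [Hz| ->]; [specialize (Hm z Hz)|]; simpl; lia. }
    specialize (Hmax B' HB' (fun z Hz => or_introl Hz) (n, m) (or_intror eq_refl)).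
    specialize (Hm _ Hmax). simpl in Hm. lia.
  - exists n. intros x. split; [apply Htail|].
    apply (Hmax (tail n) (proj1 (is_base_tail n)) Htail).
Qed.

Lemma finitarization_column n : finitarization column_indep (column n).
Proof.
  intros A HA Hsub. exists n. split; [exact Hsub|]. left. apply finite_bounded, HA.
Qed.

Lemma finitarization_same_column F x y :
  finitarization column_indep F -> F x -> F y -> fst x = fst y.
Proof.
  intros HF Hx Hy.
  destruct (HF (fun z => z = x \/ z = y)) as [n [Hcol _]].
  - exists (x :: y :: nil). intros z [->| ->]; simpl; auto.
  - intros z [->| ->]; assumption.
  - rewrite (Hcol x (or_introl eq_refl)), (Hcol y (or_intror eq_refl)). reflexivity.
Qed.

Lemma is_base_finitarization_column n : is_base (finitarization column_indep) (column n).
Proof.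
  split; [apply finitarization_column|].
  intros C HC Hsub x Hx.
  exact (finitarization_same_column C x (n, 0) HC Hx (Hsub (n, 0) eq_refl)).
Qed.

Lemma below_tail_spec n x : setD (column n) (tail n) x <-> fst x = n /\ snd x < n.
Proof. unfold setD, column, tail. lia. Qed.

Lemma card_le_below_tail n : card_le (setD (column n) (tail n)) n.
Proof.
  exists (map (pair n) (seq 0 n)). split; [rewrite length_map, length_seq; lia|].
  intros [a b] Hx. apply below_tail_spec in Hx as [Ha Hb]. simpl in Ha, Hb. subst a.
  apply in_map, in_seq. lia.
Qed.

Lemma not_card_le_below_tail n k : k < n -> ~ card_le (setD (column n) (tail n)) k.
Proof.
  intros Hkn [l [Hlen Hl]].
  assert (Hincl : incl (map (pair n) (seq 0 n)) l).
  { intros x Hx. apply Hl, below_tail_spec.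
    apply in_map_iff in Hx as [i [<- Hi]]. apply in_seq in Hi. simpl. lia. }
  assert (Hnodup : NoDup (map (pair n) (seq 0 n))).
  { apply NoDup_map_NoDup_ForallPairs; [|apply seq_NoDup].
    intros i j _ _ E. injection E. auto. }
  pose proof (NoDup_incl_length Hnodup Hincl) as H.
  rewrite length_map, length_seq in H. lia.
Qed.

Lemma base_difference_card_le B F :
  is_base column_indep B -> is_base (finitarization column_indep) F -> subset B F ->
  exists n, card_le (setD F B) n.
Proof.
  intros HB [HF _] Hsub. destruct (is_base_column_indep B HB) as [n Hn].
  exists n. apply card_le_subset with (B := setD (column n) (tail n));
    [|apply card_le_below_tail].
  assert (HBnn : B (n, n)) by (apply Hn; split; simpl; lia).
  intros x [Hx HnBx]. split.
  - exact (finitarization_same_column F x (n, n) HF Hx (Hsub _ HBnn)).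
  - rewrite <- Hn. exact HnBx.
Qed.

Theorem theorem4p2p1 :
  exists (E : Type) (L : (E -> Prop) -> Prop),
    independence_system L /\ nearly_finitary L /\
    (forall k : nat, ~ k_nearly_finitary k L).
Proof.
  exists (nat * nat)%type, column_indep. split; [|split].
  - exact column_indep_system.
  - intros B F HB HF Hsub.
    destruct (base_difference_card_le B F HB HF Hsub) as [n Hn].
    exact (card_le_finite _ n Hn).
  - intros k Hk.
    apply (not_card_le_below_tail (S k) k (Nat.lt_succ_diag_r k)).
    apply Hk; [apply is_base_tail | apply is_base_finitarization_column |].
    intros x [Hx _]. exact Hx.
Qed.
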